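(* Let $q=2$, $1\leq r\leq 2m-1$, and let $s$ be an integer with $1<s\leq 2m-r$. Let $f$ be a symplectic basis function of degree $s$ and class $(0,\sigma,\tau,\upsilon)$, where $\sigma=\min\{2m-r-s+\delta(m>r)(m-r),\lfloor s/2\rfloor\}$, $\tau=s-2\sigma$, $\upsilon=m-\sigma-\tau$. Then: (a) if $\sigma<s/2-1$, there exists $g\in\mathbf F_2\operatorname{Sp}(V)$ such that $gf$ is of class $(0,\sigma+1,\tau-3,\upsilon+2)$; (b) if $\sigma=s/2-1$ or $\sigma=(s-1)/2$, there exists $g\in\mathbf F_2\operatorname{Sp}(V)$ such that $gf$ is of class $(0,\sigma,\tau-1,\upsilon+1)$; (c) if $\sigma=s/2$, there exists $g\in\mathbf F_2\operatorname{Sp}(V)$ such that $gf$ is of class $(0,\sigma-1,\tau+1,\upsilon)$.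
   Context: $k=\mathbf F_2$. $V$ is a $2m$-dimensional $k$-space with nondegenerate alternating form and symplectic basis with coordinate functions $x_1,\dots,x_m,y_m,\dots,y_1$; $\operatorname{Sp}(V)$ acts on functions $V\to k$ by linear substitution (note $x_i^2=x_i$ as functions), extended linearly to the group ring. $\delta(P)=1$ if $P$ holds and $0$ otherwise. In $k[X_1,\dots,X_m,Y_1,\dots,Y_m]$ put $W_i=X_iY_i$ and let $Z_i$ denote $X_i$ or $Y_i$. A square-free homogeneous polynomial $F$ is of class $(\rho,\sigma,\tau,\upsilon)$ if there is a partition of $\{1,\dots,m\}$ into $R=\{r_1,\dots,r_\rho\}$, $R'=\{r'_1,\dots,r'_\rho\}$, $S,T,U$ with $|S|=\sigma,|T|=\tau,|U|=\upsilon$ and $F=\prod_{i=1}^\rho(W_{r_i}+W_{r'_i})\prod_{i\in S}W_i\prod_{i\in T}Z_i$ (degree $2\rho+2\sigma+\tau$); a function is of that class if it equals $\phi(F')$ for some $F'$ of that class, where $\phi$ is evaluation $X_i\mapsto x_i,Y_i\mapsto y_i$. $P^\lambda_\ell$ is the set of such polynomials with $2\rho+2\sigma+\tau=\lambda$ and $\sigma\leq\ell$; choose $B^\lambda_0\subseteq P^\lambda_0$ maximal linearly independent and inductively $B^\lambda_\ell=B^\lambda_{\ell-1}\cup P'^\lambda_\ell$ ($P'^\lambda_\ell\subseteq P^\lambda_\ell$) a basis of the span of $P^\lambda_\ell$. For $q=2$ a symplectic basis function of degree $\lambda$ is $\phi(F)$ with $F\in B^\lambda_{\lfloor\lambda/2\rfloor}$.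 *)

From HB Require Import structures.
From mathcomp Require Import all_boot all_order all_algebra.
Set Implicit Arguments. Unset Strict Implicit. Unset Printing Implicit Defensive.
Import GRing.Theory.
Local Open Scope ring_scope.

(* V = F_2^(2m), as row vectors; coordinate x_i is entry (lshift m i),
   coordinate y_i is entry (rshift m i), for i : 'I_m (0-based). *)
Definition Vec (m : nat) := 'rV['F_2]_(m + m).
Definition Fn (m : nat) := {ffun Vec m -> 'F_2}.

Definition xc m (v : Vec m) (i : 'I_m) : 'F_2 := v ord0 (lshift m i).
Definition yc m (v : Vec m) (i : 'I_m) : 'F_2 := v ord0 (rshift m i).
Definition Wc m (v : Vec m) (i : 'I_m) : 'F_2 := xc v i * yc v i.

Definition sform m (u v : Vec m) : 'F_2 :=
  \sum_(i < m) (xc u i * yc v i + yc u i * xc v i).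

Definition symplectic m (M : 'M['F_2]_(m + m)) : Prop :=
  forall u v : Vec m, sform (u *m M) (v *m M) = sform u v.

(* action of g = sum_{h in G} h in F_2 Sp(V) on functions, by linear
   substitution *)
Definition act m (G : {set 'M['F_2]_(m + m)}) (f : Fn m) : Fn m :=
  [ffun v => \sum_(h in G) f (v *m h)].

(* f is of class (rho, sigma, tau, upsilon): f = phi(F) with
   F = prod_i (W_{r_i} + W_{r'_i}) prod_{i in S} W_i prod_{i in T} Z_i,
   where R = {r_i}, R' = {r'_i}, S, T, U partition {1..m},
   |R| = |R'| = rho, |S| = sigma, |T| = tau, |U| = upsilon;
   Z_i = X_i if z i, Y_i otherwise. *)
Definition class_fun m (rho sigma tau upsilon : nat) (f : Fn m) : Prop :=
  exists (r r' : 'I_rho -> 'I_m) (S T : {set 'I_m}) (z : 'I_m -> bool),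
    let R := [set r i | i in 'I_rho] in
    let R' := [set r' i | i in 'I_rho] in
    let U := ~: (R :|: R' :|: S :|: T) in
    [/\ injective r, injective r',
        [/\ [disjoint R & R'], [disjoint R & S], [disjoint R & T],
            [disjoint R' & S] & [disjoint R' & T]] /\ [disjoint S & T],
        [/\ #|S| = sigma, #|T| = tau & #|U| = upsilon] &
        forall v : Vec m,
          f v = (\prod_(i < rho) (Wc v (r i) + Wc v (r' i)))
                * (\prod_(i in S) Wc v i)
                * (\prod_(i in T) (if z i then xc v i else yc v i))].

(* P^lambda_ell (via the injective evaluation phi on square-free polynomials) *)
Definition Pl m (lambda ell : nat) (f : Fn m) : Prop :=
  exists rho sigma tau upsilon,
    [/\ class_fun rho sigma tau upsilon f,
        (2 * rho + 2 * sigma + tau)%N = lambda & (sigma <= ell)%N].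

Definition lin_indep m (B : {set Fn m}) : Prop :=
  forall A : {set Fn m}, A \subset B -> A != set0 ->
    exists v, \sum_(g in A) g v != 0.

Definition in_span m (B : {set Fn m}) (h : Fn m) : Prop :=
  exists A : {set Fn m}, A \subset B /\ forall v, h v = \sum_(g in A) g v.

(* f is a symplectic basis function of degree s (q = 2): f = phi(F) with
   F in B^s_{floor(s/2)} for some admissible choice of the sets B^s_ell. *)
Definition symp_basis_fun m (s : nat) (f : Fn m) : Prop :=
  exists B : nat -> {set Fn m},
    [/\ (forall g, g \in B 0%N -> Pl s 0 g),
        lin_indep (B 0%N),
        (forall B' : {set Fn m}, B 0%N \proper B' ->
            (forall g, g \in B' -> Pl s 0 g) -> ~ lin_indep B'),
        (forall l, (0 < l <= s./2)%N ->
           exists P' : {set Fn m},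
             [/\ (forall g, g \in P' -> Pl s l g),
                 B l = B l.-1 :|: P',
                 lin_indep (B l) &
                 forall g, Pl s l g -> in_span (B l) g]) &
        f \in B s./2].

(* Such a function is a monomial W_S Z_T (W_i = X_i Y_i, Z_i = X_i or Y_i),
   and each of the three claims is a local move on at most three indices:
     (a)  Z_a Z_b Z_c ~> W_a,    (b)  Z_b Z_c ~> Z_c  or  W_a Z_c ~> W_a,
     (c)  W_a ~> X_a,
   the other factors being left untouched.  The mechanism: a product of
   symplectic transvections t_w : v |-> v + <v, w> w whose vectors w are
   supported on the coordinates X_i, Y_i of a list of indices (a "frame")
   fixes every other coordinate and acts on the frame coordinates by an
   explicit map of F_2-tuples.  So if f = L0(frame coordinates) * W_S Z_T
   with S, T off the frame, a sum of such products sends f to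
   L1(frame coordinates) * W_S Z_T as soon as a finite identity between L0
   and L1 holds on F_2-tuples; these identities are checked by enumeration. *)

From HB Require Import structures.
From mathcomp Require Import all_boot all_order all_algebra.
From mathcomp Require Import ring zify.

Import GRing.Theory.

Section Lemma6p4Development.
Local Set Implicit Arguments.
Local Unset Strict Implicit.
Local Unset Printing Implicit Defensive.
Local Open Scope ring_scope.

Lemma F2_cases (x : 'F_2) : x = 0 \/ x = 1.
Proof. by case: x => [[|[|n]] ?] //=; [left | right]; apply/val_inj. Qed.

Lemma F2_addxx (x : 'F_2) : x + x = 0.
Proof. exact/addrr_pchar2/pchar_Fp. Qed.

Ltac enum_F2 :=
  repeat match goal with x : 'F_2 |- _ => case: (F2_cases x) => ->; clear x end;
  apply/eqP; vm_compute.

Variable m : nat.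
Notation V := (Vec m).
Notation M := 'M['F_2]_(m + m).

Definition coord (i : 'I_m) (b : bool) : 'I_(m + m) :=
  if b then lshift m i else rshift m i.
Definition unitv (j : 'I_(m + m)) : V := delta_mx 0 j.


Lemma coord_eq (i j : 'I_m) b c : (coord i b == coord j c) = (i == j) && (b == c).
Proof.
by case: b; case: c; rewrite /coord ?eq_lshift ?eq_rshift ?eq_lrshift ?eq_rlshift
  ?andbT ?andbF.
Qed.

Section SymplecticForm.

Lemma sformDl (u1 u2 w : V) : sform (u1 + u2) w = sform u1 w + sform u2 w.
Proof.
rewrite /sform -big_split; apply: eq_bigr => i _.
by rewrite /xc /yc !mxE !mulrDl addrACA.
Qed.

Lemma sformZl c (u w : V) : sform (c *: u) w = c * sform u w.
Proof.
rewrite /sform mulr_sumr; apply: eq_bigr => i _.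
by rewrite /xc /yc !mxE mulrDr !mulrA.
Qed.

Lemma sformC (u w : V) : sform u w = sform w u.
Proof.
rewrite /sform; apply: eq_bigr => i _.
by rewrite addrC [xc w i * _]mulrC [yc w i * _]mulrC.
Qed.

Lemma sformDr (u w1 w2 : V) : sform u (w1 + w2) = sform u w1 + sform u w2.
Proof. by rewrite sformC sformDl !(sformC u). Qed.

Lemma sformZr c (u w : V) : sform u (c *: w) = c * sform u w.
Proof. by rewrite sformC sformZl sformC. Qed.

Lemma sform_alt (w : V) : sform w w = 0.
Proof. by rewrite /sform big1 // => i _; rewrite mulrC F2_addxx. Qed.

Lemma sform0r (u : V) : sform u 0 = 0.
Proof. by rewrite -(scale0r (0 : V)) sformZr mul0r. Qed.

Lemma sform_unitv (v : V) i b : sform v (unitv (coord i b)) = v ord0 (coord i (~~ b)).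
Proof.
rewrite /sform (bigD1 i) //= big1 => [|k /negbTE k_neq_i];
  rewrite /xc /yc /unitv /coord; case: b => /=; rewrite !mxE
  ?eq_rlshift ?eq_lrshift ?eq_lshift ?eq_rshift ?eqxx ?k_neq_i /=;
  by rewrite ?mulr0 ?mulr1 ?addr0 ?add0r.
Qed.

(* The symplectic transvection v |-> v + <v, w> w, as a matrix acting on rows. *)
Definition transvection (w : V) : M :=
  \matrix_(i, j) ((i == j)%:R + sform (unitv i) w * w ord0 j).

Lemma transvectionE (v w : V) : v *m transvection w = v + sform v w *: w.
Proof.
apply/rowP => j; rewrite !mxE.
under eq_bigr do rewrite mxE mulrDr.
rewrite big_split /= (bigD1 j) //= eqxx mulr1 big1 ?addr0 => [|i /negbTE ->];
  last by rewrite mulr0.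
congr (_ + _).
have -> : sform v w = \sum_i v ord0 i * sform (unitv i) w.
  rewrite {1}(row_sum_delta v).
  elim/big_rec2: _ => [|i y1 y2 _ IH]; first by rewrite -(scale0r (0 : V)) sformZl mul0r.
  by rewrite sformDl sformZl IH.
by rewrite mulr_suml; apply: eq_bigr => i _; rewrite mulrA.
Qed.

Lemma transvection_symplectic (w : V) : symplectic (transvection w).
Proof.
move=> u v; rewrite !transvectionE sformDl !sformDr !sformZl !sformZr sform_alt.
rewrite !mulr0 addr0 [sform w v]sformC [sform v w * _]mulrC.
by rewrite -addrA F2_addxx addr0.
Qed.

Lemma symplectic1 : symplectic (1%:M : M).
Proof. by move=> u v; rewrite !mulmx1. Qed.

Lemma symplecticM (A B : M) : symplectic A -> symplectic B -> symplectic (A *m B).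
Proof. by move=> symA symB u v; rewrite !mulmxA symB symA. Qed.

End SymplecticForm.

Section GroupRing.

(* The element sum_{h <- l} h of F_2 Sp(V), as the set of matrices occurring
   an odd number of times in l (coefficients are taken mod 2). *)
Definition grsum (l : seq M) : {set M} := [set h | odd (count_mem h l)].

Lemma grsum_cons (x : M) (l : seq M) :
  grsum (x :: l) = if x \in grsum l then grsum l :\ x else x |: grsum l.
Proof.
apply/setP => h; case: ifPn; rewrite !inE /= eq_sym;
  by case: (eqVneq h x) => [->|_] //= ->.
Qed.

Lemma sum_grsum (l : seq M) (F : M -> 'F_2) :
  \sum_(h in grsum l) F h = \sum_(h <- l) F h.
Proof.
elim: l => [|x l IH]; first by rewrite big_nil big_pred0 // => h; rewrite inE.
rewrite big_cons -IH grsum_cons; case: ifPn => x_in.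
  by rewrite [in RHS](big_setD1 x x_in) addrA F2_addxx add0r.
by rewrite big_setU1.
Qed.

Lemma act_grsum (l : seq M) (f : Fn m) (v : V) :
  act (grsum l) f v = \sum_(h <- l) f (v *m h).
Proof. by rewrite /act ffunE sum_grsum. Qed.

End GroupRing.

Section Frames.

(* A frame is a list of indices i, each with a chosen coordinate b: it
   singles out the coordinates (coord i b, coord i (~~ b)) of all its
   indices, in this order. *)
Definition frame := seq ('I_m * bool).

Definition frame_coords (l : frame) : seq 'I_(m + m) :=
  flatten [seq [:: coord p.1 p.2; coord p.1 (~~ p.2)] | p <- l].

Definition restr (v : V) (l : frame) : seq 'F_2 :=
  [seq v ord0 j | j <- frame_coords l].

Fixpoint embed (l : frame) (w : seq 'F_2) : V :=
  match l, w with
  | p :: l', a :: b :: w' =>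
      a *: unitv (coord p.1 p.2) + b *: unitv (coord p.1 (~~ p.2)) + embed l' w'
  | _, _ => 0
  end.

(* The symplectic form and the transvections, in frame coordinates. *)
Fixpoint lform (s w : seq 'F_2) : 'F_2 :=
  match s, w with
  | a :: b :: s', c :: d :: w' => a * d + b * c + lform s' w'
  | _, _ => 0
  end.

Definition ltrans (w s : seq 'F_2) : seq 'F_2 :=
  [seq p.1 + lform s w * p.2 | p <- zip s w].

Lemma coord_notin_frame (i : 'I_m) b (l : frame) :
  i \notin [seq p.1 | p <- l] -> coord i b \notin frame_coords l.
Proof.
elim: l => [|[j c] l IH] //=; rewrite !inE negb_or => /andP [i_neq_j i_notin].
by rewrite !coord_eq !negb_or (negbTE i_neq_j) IH.
Qed.

Lemma uniq_frame_coords (l : frame) :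
  uniq [seq p.1 | p <- l] -> uniq (frame_coords l).
Proof.
elim: l => [|[i b] l IH] //= /andP [i_notin uniq_l].
rewrite !inE coord_eq eqxx andTb negb_or !coord_notin_frame // IH //.
by case: b.
Qed.

Lemma sform_embed (v : V) l w : sform v (embed l w) = lform (restr v l) w.
Proof.
elim: l w => [|[i b] l IH] [|x [|y w]] /=; rewrite ?sform0r //.
rewrite !sformDr !sformZr !sform_unitv negbK IH /restr /=.
by rewrite [y * _]mulrC [x * _]mulrC [_ * x + _]addrC.
Qed.

Lemma embed_out l w j : j \notin frame_coords l -> embed l w ord0 j = 0.
Proof.
elim: l w => [|[i b] l IH] [|x [|y w]] /=; rewrite ?mxE // !inE !negb_or.
case/and3P => /negbTE j_neq1 /negbTE j_neq2 j_notin.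
by rewrite j_neq1 j_neq2 !andbF !mulr0 !add0r IH.
Qed.

Lemma restr_embed l w :
  uniq (frame_coords l) -> size w = size (frame_coords l) -> restr (embed l w) l = w.
Proof.
elim: l w => [|[i b] l IH] [|x [|y w]] //= /and3P [notin1 notin2 uniq_l] [size_w].
move: notin1; rewrite inE negb_or => /andP [neq12 notin1].
rewrite /restr /= !mxE !eqxx (negbTE neq12) eq_sym (negbTE neq12) /=.
rewrite !embed_out // mulr1 !mulr0 mulr1 !addr0 add0r; congr [:: _, _ & _].
rewrite -[RHS](IH w uniq_l size_w) /restr; apply/eq_in_map => j j_in.
have [neq1 neq2] : j != coord i b /\ j != coord i (~~ b).
  by split; [apply: contraNneq notin1 | apply: contraNneq notin2] => <-.
by rewrite !mxE (negbTE neq1) (negbTE neq2) !andbF !mulr0 !add0r.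
Qed.


Lemma restr_add (u w : V) c l :
  restr (u + c *: w) l = [seq p.1 + c * p.2 | p <- zip (restr u l) (restr w l)].
Proof. by rewrite /restr; elim: (frame_coords l) => [|j js IH] //=; rewrite IH !mxE. Qed.

Definition acts_on_frame (h : M) (l : frame) (phi : seq 'F_2 -> seq 'F_2) :=
  (forall (v : V) j, j \notin frame_coords l -> (v *m h) ord0 j = v ord0 j) /\
  (forall v, restr (v *m h) l = phi (restr v l)).

Lemma transvection_acts l w :
  uniq (frame_coords l) -> size w = size (frame_coords l) ->
  acts_on_frame (transvection (embed l w)) l (ltrans w).
Proof.
move=> uniq_l size_w; split=> [v j j_notin|v].
  by rewrite transvectionE !mxE embed_out // mulr0 addr0.
by rewrite transvectionE restr_add restr_embed // sform_embed.
Qed.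

Lemma acts_on_frameM h1 h2 l phi1 phi2 :
  acts_on_frame h1 l phi1 -> acts_on_frame h2 l phi2 ->
  acts_on_frame (h1 *m h2) l (phi2 \o phi1).
Proof.
move=> [out1 in1] [out2 in2]; split=> v; last by rewrite mulmxA in2 in1.
by move=> j j_notin; rewrite mulmxA out2 // out1.
Qed.

Fixpoint tword (l : frame) (ws : seq (seq 'F_2)) : M :=
  if ws is w :: ws' then transvection (embed l w) *m tword l ws' else 1%:M.

Fixpoint run (ws : seq (seq 'F_2)) (s : seq 'F_2) : seq 'F_2 :=
  if ws is w :: ws' then run ws' (ltrans w s) else s.

Lemma tword_acts l ws :
  uniq (frame_coords l) -> all (fun w => size w == size (frame_coords l)) ws ->
  acts_on_frame (tword l ws) l (run ws).
Proof.
move=> uniq_l; elim: ws => [|w ws IH] /=; first by split=> v; rewrite ?mulmx1.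
by case/andP => /eqP size_w /IH; apply: acts_on_frameM (transvection_acts uniq_l size_w).
Qed.

Lemma tword_symplectic l ws : symplectic (tword l ws).
Proof.
elim: ws => [|w ws IH] /=; first exact: symplectic1.
exact: symplecticM (transvection_symplectic _) IH.
Qed.

End Frames.

Section Monomials.

Definition Zc (z : 'I_m -> bool) (v : V) (i : 'I_m) : 'F_2 :=
  if z i then xc v i else yc v i.

Definition monomial (S T : {set 'I_m}) (z : 'I_m -> bool) (v : V) : 'F_2 :=
  (\prod_(i in S) Wc v i) * (\prod_(i in T) Zc z v i).

Lemma Zc_coord z (v : V) i : Zc z v i = v ord0 (coord i (z i)).
Proof. by rewrite /Zc /coord; case: (z i). Qed.

Lemma Wc_coord (v : V) i b : Wc v i = v ord0 (coord i b) * v ord0 (coord i (~~ b)).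
Proof. by rewrite /Wc /xc /yc /coord; case: b; rewrite // mulrC. Qed.

Lemma monomial_acts S T z h l phi (v : V) :
  acts_on_frame h l phi -> {in S :|: T, forall i, i \notin [seq p.1 | p <- l]} ->
  monomial S T z (v *m h) = monomial S T z v.
Proof.
move=> [fixes _] disj; rewrite /monomial.
have fixes_i i b : i \in S :|: T -> (v *m h) ord0 (coord i b) = v ord0 (coord i b).
  by move=> i_in; rewrite fixes // coord_notin_frame // disj.
congr (_ * _); apply: eq_bigr => i i_in.
  by rewrite !(Wc_coord _ _ true) !fixes_i // inE i_in.
by rewrite !Zc_coord fixes_i // inE i_in orbT.
Qed.

Lemma local_move (f : Fn m) (l : frame) (words : seq (seq (seq 'F_2)))
    (L0 L1 : seq 'F_2 -> 'F_2) S T z :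
  uniq [seq p.1 | p <- l] ->
  all (all (fun w => size w == size (frame_coords l))) words ->
  {in S :|: T, forall i, i \notin [seq p.1 | p <- l]} ->
  (forall v, f v = L0 (restr v l) * monomial S T z v) ->
  (forall v, \sum_(ws <- words) L0 (run ws (restr v l)) = L1 (restr v l)) ->
  exists2 G : {set M}, (forall h, h \in G -> symplectic h) &
    forall v, act G f v = L1 (restr v l) * monomial S T z v.
Proof.
move=> uniq_l sizes disj f_eq local_id.
exists (grsum [seq tword l ws | ws <- words]) => [h|v].
  rewrite inE => odd_h; have /mapP [ws _ ->] : h \in [seq tword l ws | ws <- words].
    by rewrite -has_pred1 has_count lt0n; apply: contraTneq odd_h => ->.
  exact: tword_symplectic.
rewrite act_grsum big_map -local_id mulr_suml big_seq [RHS]big_seq.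
apply: eq_bigr => ws ws_in.
have acts := tword_acts (uniq_frame_coords uniq_l) (allP sizes ws ws_in).
by rewrite f_eq (monomial_acts _ _ acts disj); case: acts => _ ->.
Qed.

End Monomials.

Section Classes.

Lemma card_setC (A : {set 'I_m}) : #|~: A| = (m - #|A|)%N.
Proof. by rewrite cardsCs card_ord setCK. Qed.

Lemma imset_ord0 (r : 'I_0 -> 'I_m) : [set r i | i in 'I_0] = set0.
Proof. by apply/setP => x; rewrite inE; apply/imsetP => -[[]]. Qed.

Lemma class0_of_monomial sigma tau upsilon (S T : {set 'I_m}) z (g : Fn m) :
  [disjoint S & T] -> #|S| = sigma -> #|T| = tau -> (m - (sigma + tau))%N = upsilon ->
  (forall v, g v = monomial S T z v) -> class_fun 0 sigma tau upsilon g.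
Proof.
move=> disjST cardS cardT cardU g_eq.
exists (ffun0 (card_ord 0)), (ffun0 (card_ord 0)), S, T, z => /=.
rewrite !imset_ord0 !set0U; split; [by case | by case | | | by move=> v; rewrite big_ord0 mul1r g_eq].
  by split=> //; split; rewrite -setI_eq0 set0I.
split=> //; rewrite card_setC cardsU; move: disjST; rewrite -setI_eq0 => /eqP ->.
by rewrite cards0 subn0 cardS cardT.
Qed.

Lemma monomial_of_class0 sigma tau upsilon (f : Fn m) :
  class_fun 0 sigma tau upsilon f ->
  exists (S T : {set 'I_m}) (z : 'I_m -> bool),
    [/\ [disjoint S & T], #|S| = sigma, #|T| = tau,
    (sigma + tau <= m)%N /\ (m - (sigma + tau))%N = upsilon &
    forall v, f v = monomial S T z v].
Proof.
move=> [r [r' [S [T [z /=]]]]] [_ _ [_ disjST] [cardS cardT cardU] f_eq].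
move: cardU; rewrite !imset_ord0 !set0U card_setC => cardU.
have cardST : #|S :|: T| = (sigma + tau)%N.
  by rewrite cardsU; move: disjST; rewrite -setI_eq0 => /eqP ->; rewrite cards0 subn0 cardS cardT.
exists S, T, z; split=> //; last by move=> v; rewrite f_eq big_ord0 mul1r.
by rewrite -cardST -cardU; split=> //; have := max_card (S :|: T); rewrite card_ord.
Qed.

End Classes.


Section LocalIdentities.

(* A frame vector is listed as
   (Z_1, Z'_1, Z_2, Z'_2, ...), where Z'_i is the coordinate dual to Z_i, so
   that W_i = Z_i Z'_i; a list of words stands for the sum of the
   corresponding products of transvections. *)

(* With t : Y_a |-> Y_a + X_a, (1 + t) W_a = X_a Y_a + X_a (Y_a + X_a) = X_a. *)
Definition words_W_to_Z : seq (seq (seq 'F_2)) := [:: [::]; [:: [:: 0; 1]]].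

Lemma local_W_to_Z (x1 x2 : 'F_2) :
  \sum_(ws <- words_W_to_Z) (let t := run ws [:: x1; x2] in t`_0 * t`_1) = x1.
Proof. by rewrite unlock; enum_F2. Qed.

(* With t1 : Z_b |-> Z_b + Z'_b and t2 the transvection along e_{Z_b} + e_{Z'_c},
   (t1 + t2) (Z_b Z_c) = (Z_b + Z'_b) Z_c + (Z_b + Z'_b + Z_c) Z_c = Z_c. *)
Definition words_drop_Z : seq (seq (seq 'F_2)) :=
  [:: [:: [:: 1; 0; 0; 0]]; [:: [:: 1; 0; 0; 1]]].

Lemma local_drop_Z (x1 x2 x3 x4 : 'F_2) :
  \sum_(ws <- words_drop_Z) (let t := run ws [:: x1; x2; x3; x4] in t`_0 * t`_2) = x3.
Proof. by rewrite unlock; enum_F2. Qed.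

Definition words_drop_Z_at_W : seq (seq (seq 'F_2)) :=
  [:: [:: [:: 0; 0; 1; 0]]; [:: [:: 1; 0; 0; 0]; [:: 1; 0; 1; 0]];
      [:: [:: 0; 1; 1; 0]; [:: 1; 1; 1; 1]]].

Lemma local_drop_Z_at_W (x1 x2 x3 x4 : 'F_2) :
  \sum_(ws <- words_drop_Z_at_W)
    (let t := run ws [:: x1; x2; x3; x4] in t`_0 * t`_1 * t`_2) = x1 * x2.
Proof. by rewrite unlock; enum_F2. Qed.

(* The product (sum over words_ZZZ_2) (sum over words_ZZZ_1) in the group
   ring turns Z_a Z_b Z_c into W_a. *)
Definition words_ZZZ_1 : seq (seq (seq 'F_2)) :=
  [:: [::]; [:: [:: 1; 0; 0; 0; 0; 0]; [:: 1; 0; 1; 0; 0; 0]];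
            [:: [:: 1; 0; 1; 0; 0; 0]; [:: 0; 0; 1; 1; 0; 0]]].
Definition words_ZZZ_2 : seq (seq (seq 'F_2)) :=
  [:: [:: [:: 0; 0; 0; 0; 1; 0]]; [:: [:: 1; 0; 0; 0; 0; 0]; [:: 1; 0; 0; 0; 1; 0]];
      [:: [:: 0; 1; 0; 0; 1; 0]; [:: 1; 1; 0; 0; 1; 1]]].
Definition words_ZZZ_to_W : seq (seq (seq 'F_2)) :=
  [seq ws2 ++ ws1 | ws2 <- words_ZZZ_2, ws1 <- words_ZZZ_1].

Lemma local_ZZZ_to_W (x1 x2 x3 x4 x5 x6 : 'F_2) :
  \sum_(ws <- words_ZZZ_to_W)
    (let t := run ws [:: x1; x2; x3; x4; x5; x6] in t`_0 * t`_2 * t`_4) = x1 * x2.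
Proof. by rewrite unlock; enum_F2. Qed.

End LocalIdentities.


Section Moves.

Lemma card_pick (A : {set 'I_m}) n : #|A| = n.+1 -> exists2 a, a \in A & #|A :\ a| = n.
Proof.
move=> cardA; have [a aA] : exists a, a \in A by apply/card_gt0P; rewrite cardA.
by exists a => //; move: cardA; rewrite (cardsD1 a) aA => -[].
Qed.

Lemma off_frame (A : {set 'I_m}) (l : frame) :
  all (fun p => p.1 \notin A) l -> {in A, forall i, i \notin [seq p.1 | p <- l]}.
Proof.
by move=> /allP off i iA; apply/mapP => -[p /off p_off i_eq]; rewrite -i_eq iA in p_off.
Qed.

Lemma move_W_to_Z sigma upsilon (f : Fn m) : (0 < sigma)%N ->
  class_fun 0 sigma 0 upsilon f ->
  exists G : {set M}, (forall h, h \in G -> symplectic h) /\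
    class_fun 0 sigma.-1 1 upsilon (act G f).
Proof.
case: sigma => // sigma _ /monomial_of_class0 [S [T [z [_ cardS /eqP]]]].
rewrite cards_eq0 => /eqP -> [_ cardU] f_eq.
have [a aS cardSa] := card_pick cardS.
have [|||||G symG actG] := @local_move f [:: (a, true)] words_W_to_Z
  (fun t => t`_0 * t`_1) (fun t => t`_0) (S :\ a) set0 z _ _ _ _ _.
- by [].
- by [].
- by apply: off_frame; rewrite /= setU0 !inE eqxx.
- by move=> v; rewrite f_eq /monomial !big_set0 (big_setD1 a aS) (Wc_coord _ _ true) /=; ring.
- by move=> v; apply: local_W_to_Z.
exists G; split=> //.
apply: (@class0_of_monomial _ _ _ (S :\ a) [set a] (fun _ => true)) => //.
- by rewrite disjoint_sym disjoints1 setD11.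
- by rewrite cards1.
- by rewrite -cardU addn1 addn0.
- by move=> v; rewrite actG /monomial big_set0 big_set1 /Zc /xc /= /coord; ring.
Qed.

Lemma move_drop_Z sigma upsilon (f : Fn m) :
  class_fun 0 sigma 2 upsilon f ->
  exists G : {set M}, (forall h, h \in G -> symplectic h) /\
    class_fun 0 sigma 1 upsilon.+1 (act G f).
Proof.
move=> /monomial_of_class0 [S [T [z [disjST cardS cardT [le_m cardU] f_eq]]]].
have [b bT cardTb] := card_pick cardT.
have [c cTb cardTbc] := card_pick cardTb.
have [c_neq_b cT] := setD1P cTb.
have [|||||G symG actG] := @local_move f [:: (b, z b); (c, z c)] words_drop_Z
  (fun t => t`_0 * t`_2) (fun t => t`_2) S (T :\ b :\ c) z _ _ _ _ _.
- by rewrite /= inE andbT eq_sym.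
- by [].
- apply: off_frame; rewrite /= !inE !eqxx (disjointFl disjST bT) (disjointFl disjST cT).
  by rewrite !andbF.
- move=> v; rewrite f_eq /monomial (big_setD1 b bT) (big_setD1 c cTb) /= !Zc_coord; ring.
- by move=> v; apply: local_drop_Z.
exists G; split=> //.
apply: (@class0_of_monomial _ _ _ S (T :\ b) z) => //.
- exact: disjointWr (subD1set T b) disjST.
- by rewrite -cardU; move: le_m; clear; lia.
- by move=> v; rewrite actG /monomial (big_setD1 c cTb) /= Zc_coord; ring.
Qed.


Lemma move_drop_Z_at_W sigma upsilon (f : Fn m) : (0 < sigma)%N ->
  class_fun 0 sigma 1 upsilon f ->
  exists G : {set M}, (forall h, h \in G -> symplectic h) /\
    class_fun 0 sigma 0 upsilon.+1 (act G f).
Proof.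
move=> sigma_gt0 /monomial_of_class0 [S [T [z [disjST cardS cardT [le_m cardU] f_eq]]]].
have [c cT /eqP] := card_pick cardT; rewrite cards_eq0 => /eqP Tc_empty.
have [a aS] : exists a, a \in S by apply/card_gt0P; rewrite cardS.
have a_neq_c : a != c by apply: contraFneq (disjointFr disjST aS) => ->.
have [|||||G symG actG] := @local_move f [:: (a, true); (c, z c)] words_drop_Z_at_W
  (fun t => t`_0 * t`_1 * t`_2) (fun t => t`_0 * t`_1) (S :\ a) (T :\ c) z _ _ _ _ _.
- by rewrite /= inE andbT.
- by [].
- apply: off_frame; rewrite /= !inE !eqxx (disjointFr disjST aS) (disjointFl disjST cT).
  by rewrite !andbF.
- move=> v; rewrite f_eq /monomial (big_setD1 a aS) (big_setD1 c cT) /=.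
  by rewrite Zc_coord (Wc_coord _ _ true); ring.
- by move=> v; apply: local_drop_Z_at_W.
exists G; split=> //.
apply: (@class0_of_monomial _ _ _ S set0 z) => //.
- by rewrite -setI_eq0 setI0.
- by rewrite cards0.
- by rewrite -cardU; move: le_m; clear; lia.
- move=> v; rewrite actG /monomial Tc_empty !big_set0 (big_setD1 a aS) /=.
  by rewrite (Wc_coord _ _ true); ring.
Qed.

Lemma move_ZZZ_to_W sigma tau upsilon (f : Fn m) :
  class_fun 0 sigma tau.+3 upsilon f ->
  exists G : {set M}, (forall h, h \in G -> symplectic h) /\
    class_fun 0 sigma.+1 tau (upsilon + 2) (act G f).
Proof.
move=> /monomial_of_class0 [S [T [z [disjST cardS cardT [le_m cardU] f_eq]]]].
have [a aT cardTa] := card_pick cardT.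
have [b bTa cardTab] := card_pick cardTa.
have [c cTab cardR] := card_pick cardTab.
have [b_neq_a bT] := setD1P bTa.
have [c_neq_b /setD1P [c_neq_a cT]] := setD1P cTab.
set R := T :\ a :\ b :\ c in cardR *.
have sub_RT : R \subset T by apply/subsetP => i; rewrite !inE => /and4P [].
have aS : a \notin S by rewrite (disjointFl disjST aT).
have [|||||G symG actG] := @local_move f [:: (a, z a); (b, z b); (c, z c)] words_ZZZ_to_W
  (fun t => t`_0 * t`_2 * t`_4) (fun t => t`_0 * t`_1) S R z _ _ _ _ _.
- by rewrite /= !inE !negb_or eq_sym b_neq_a eq_sym c_neq_a eq_sym c_neq_b.
- by [].
- apply: off_frame; rewrite /= !inE !eqxx (negbTE aS) (disjointFl disjST bT).
  by rewrite (disjointFl disjST cT) !andbF.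
- move=> v; rewrite f_eq /monomial (big_setD1 a aT) (big_setD1 b bTa) (big_setD1 c cTab) /=.
  by rewrite !Zc_coord; ring.
- by move=> v; apply: local_ZZZ_to_W.
exists G; split=> //.
apply: (@class0_of_monomial _ _ _ (a |: S) R z) => //.
- rewrite disjoints_subset subUset sub1set -disjoints_subset !inE eqxx !andbF /=.
  exact: disjointWr sub_RT disjST.
- by rewrite cardsU1 aS cardS.
- by rewrite -cardU; move: le_m; clear; lia.
- move=> v; rewrite actG /monomial (big_setU1 _ aS) /= (Wc_coord _ _ (z a)); ring.
Qed.

End Moves.

End Lemma6p4Development.

Theorem lemma6p4 (m r s sigma tau upsilon : nat) (f : Fn m)
  (hr : (1 <= r <= 2 * m - 1)%N)
  (hs : (1 < s <= 2 * m - r)%N)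
  (hsigma : sigma = minn (2 * m - r - s + (if (r < m)%N then m - r else 0))%N
                         s./2)
  (htau : tau = (s - 2 * sigma)%N)
  (hupsilon : upsilon = (m - sigma - tau)%N)
  (hbasis : symp_basis_fun s f)
  (hclass : class_fun 0 sigma tau upsilon f) :
  [/\ (2 * sigma + 2 < s)%N ->
        exists G : {set 'M['F_2]_(m + m)},
          (forall h, h \in G -> symplectic h) /\
          class_fun 0 sigma.+1 (tau - 3) (upsilon + 2) (act G f),
      (2 * sigma + 2 = s \/ 2 * sigma + 1 = s)%N ->
        exists G : {set 'M['F_2]_(m + m)},
          (forall h, h \in G -> symplectic h) /\
          class_fun 0 sigma (tau - 1) upsilon.+1 (act G f) &
      (2 * sigma = s)%N ->
        exists G : {set 'M['F_2]_(m + m)},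
          (forall h, h \in G -> symplectic h) /\
          class_fun 0 sigma.-1 tau.+1 upsilon (act G f)].
Proof.
have s_gt1 : (1 < s)%N by case/andP: hs.
split=> [s_gt | [s_eq | s_eq] | s_eq].
- apply: move_ZZZ_to_W; rewrite -addn3 subnK //; lia.
- by move: hclass; rewrite (_ : tau = 2%N) ?subn1; [apply: move_drop_Z | lia].
- have sigma_gt0 : (0 < sigma)%N by lia.
  by move: hclass; rewrite (_ : tau = 1%N); [apply: move_drop_Z_at_W | lia].
- have sigma_gt0 : (0 < sigma)%N by lia.
  by move: hclass; rewrite (_ : tau = 0%N); [apply: move_W_to_Z | lia].
Qed.
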